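(* Let $n\ge0$ and $m\ge n+2$. Then $L_n^{n+1}=L_n^m$, i.e. for every set of formulas $\Gamma$ and formula $\alpha$, $\Gamma\vdash_{L_n^{n+1}}\alpha$ iff $\Gamma\vdash_{L_n^m}\alpha$.
   Context: Formulas are built from a countable set of propositional variables using unary $\neg,\circ$ and binary $\land,\lor,\to$; $\circ^0\alpha=\alpha$, $\circ^{m+1}\alpha=\circ(\circ^m\alpha)$, $\alpha\leftrightarrow\beta:=(\alpha\to\beta)\land(\beta\to\alpha)$. mbC is the Hilbert calculus with the axiom schemas of a standard axiomatization of positive classical propositional logic in $\land,\lor,\to$, plus (TND) $\alpha\lor\neg\alpha$ and (bc1) $\circ\alpha\to(\alpha\to(\neg\alpha\to\beta))$, modus ponens being the only rule; mbCciw is mbC plus (ciw) $\circ\alpha\lor(\alpha\land\neg\alpha)$. For $n\ge0$, $k\ge1$, $L_n^k$ is mbCciw plus (cc$^n$) $\circ^{n+2}\alpha$, (dn) $\neg\neg\alpha\leftrightarrow\alpha$, and (ip$^j$) $\neg\circ^j\neg\alpha\leftrightarrow\neg\circ^j\alpha$ for each $1\le j<k$. $\Gamma\vdash_L\alpha$ denotes derivability of $\alpha$ from $\Gamma$ in $L$. *)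

From Stdlib Require Import Arith.

Inductive form : Type :=
  | Var : nat -> form
  | Neg : form -> form
  | Circ : form -> form
  | And : form -> form -> form
  | Or : form -> form -> form
  | Imp : form -> form -> form.

Fixpoint circ_iter (m : nat) (a : form) : form :=
  match m with
  | 0 => a
  | S m' => Circ (circ_iter m' a)
  end.

Definition Iff (a b : form) : form := And (Imp a b) (Imp b a).

Inductive cpl_pos_axiom : form -> Prop :=
  | Ax1 a b : cpl_pos_axiom (Imp a (Imp b a))
  | Ax2 a b c : cpl_pos_axiom
      (Imp (Imp a b) (Imp (Imp a (Imp b c)) (Imp a c)))
  | Ax3 a b : cpl_pos_axiom (Imp a (Imp b (And a b)))
  | Ax4 a b : cpl_pos_axiom (Imp (And a b) a)
  | Ax5 a b : cpl_pos_axiom (Imp (And a b) b)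
  | Ax6 a b : cpl_pos_axiom (Imp a (Or a b))
  | Ax7 a b : cpl_pos_axiom (Imp b (Or a b))
  | Ax8 a b c : cpl_pos_axiom
      (Imp (Imp a c) (Imp (Imp b c) (Imp (Or a b) c)))
  | Ax9 a b : cpl_pos_axiom (Or a (Imp a b)).

Inductive mbC_axiom : form -> Prop :=
  | mbC_pos a : cpl_pos_axiom a -> mbC_axiom a
  | mbC_TND a : mbC_axiom (Or a (Neg a))
  | mbC_bc1 a b : mbC_axiom (Imp (Circ a) (Imp a (Imp (Neg a) b))).

Inductive mbCciw_axiom : form -> Prop :=
  | ciw_mbC a : mbC_axiom a -> mbCciw_axiom a
  | ciw_ciw a : mbCciw_axiom (Or (Circ a) (And a (Neg a))).

Inductive L_axiom (n k : nat) : form -> Prop :=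
  | L_base a : mbCciw_axiom a -> L_axiom n k a
  | L_cc a : L_axiom n k (circ_iter (n + 2) a)
  | L_dn a : L_axiom n k (Iff (Neg (Neg a)) a)
  | L_ip j a : 1 <= j -> j < k ->
      L_axiom n k (Iff (Neg (circ_iter j (Neg a))) (Neg (circ_iter j a))).

Inductive derivable (Ax : form -> Prop) (Gamma : form -> Prop) : form -> Prop :=
  | d_prem a : Gamma a -> derivable Ax Gamma a
  | d_ax a : Ax a -> derivable Ax Gamma a
  | d_mp a b : derivable Ax Gamma (Imp a b) -> derivable Ax Gamma a ->
      derivable Ax Gamma b.

Definition L_derivable (n k : nat) (Gamma : form -> Prop) (a : form) : Prop :=
  derivable (L_axiom n k) Gamma a.

(** For [j >= n + 2] the axiom ip^j is derivable in any [L_n^k]: [∘^j b] and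
    [∘^(j+1) b] are instances of cc^n, so by bc1 both [¬∘^j ¬a] and [¬∘^j a]
    are explosive.  For [j = n + 1], [∘∘b] is a theorem for [b = ∘^n c], and
    then ciw and bc1 give [¬∘b <-> b ∧ ¬b]; this reduces ip^(n+1) to
    [∘^n ¬a <-> ∘^n a] together with ip^n.  The former follows from
    [∘a <-> ∘¬a] (a consequence of dn) by pushing [∘] through equivalences
    with ip^1, ..., ip^(n-1).  Hence all [L_n^k] with [k >= n + 1] coincide. *)

From Stdlib Require Import Arith Lia.

Definition ip_axiom (j : nat) (a : form) : form :=
  Iff (Neg (circ_iter j (Neg a))) (Neg (circ_iter j a)).

Lemma circ_iter_add p q x : circ_iter (p + q) x = circ_iter p (circ_iter q x).
Proof. induction p; simpl; congruence. Qed.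

Definition extend (Gamma : form -> Prop) (a : form) : form -> Prop :=
  fun x => Gamma x \/ x = a.

Ltac premise := apply d_prem; unfold extend; auto 10.

Lemma derivable_mono_premises Ax (Gamma Delta : form -> Prop) a :
  (forall x, Gamma x -> Delta x) -> derivable Ax Gamma a -> derivable Ax Delta a.
Proof.
  intros HGD H; induction H.
  - apply d_prem; auto.
  - apply d_ax; assumption.
  - eapply d_mp; eassumption.
Qed.

Lemma derivable_extend Ax Gamma a b :
  derivable Ax Gamma b -> derivable Ax (extend Gamma a) b.
Proof. apply derivable_mono_premises; unfold extend; auto. Qed.

Lemma derivable_mono_axioms (Ax Ax' : form -> Prop) Gamma a :
  (forall b, Ax b -> derivable Ax' Gamma b) ->
  derivable Ax Gamma a -> derivable Ax' Gamma a.
Proof.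
  intros HAx H; induction H.
  - apply d_prem; assumption.
  - auto.
  - eapply d_mp; eassumption.
Qed.

Class PositiveAxioms (Ax : form -> Prop) : Prop :=
  positive_axioms : forall a, cpl_pos_axiom a -> Ax a.

Section PositiveLogic.

Context {Ax : form -> Prop} {Ax_pos : PositiveAxioms Ax}.

Notation "G |- a" := (derivable Ax G a) (at level 70).

Lemma derivable_pos G a : cpl_pos_axiom a -> G |- a.
Proof. intros; apply d_ax, positive_axioms; assumption. Qed.

Lemma imp_refl G a : G |- Imp a a.
Proof.
  apply (d_mp _ _ (Imp a (Imp (Imp a a) a)));
    [apply (d_mp _ _ (Imp a (Imp a a))) |]; apply derivable_pos; constructor.
Qed.

Lemma deduction G a b : extend G a |- b -> G |- Imp a b.
Proof.
  intros H; induction H as [x [Hx | ->] | x Hx | x y _ IHxy _ IHx].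
  - eapply d_mp; [apply derivable_pos, Ax1 | apply d_prem; exact Hx].
  - apply imp_refl.
  - eapply d_mp; [apply derivable_pos, Ax1 | apply d_ax; exact Hx].
  - eapply d_mp; [eapply d_mp; [apply derivable_pos, (Ax2 a x y) |] |]; eassumption.
Qed.

Lemma and_intro G a b : G |- a -> G |- b -> G |- And a b.
Proof.
  intros Ha Hb; eapply d_mp; [eapply d_mp; [apply derivable_pos, Ax3 |] |]; eassumption.
Qed.

Lemma and_elim_l G a b : G |- And a b -> G |- a.
Proof. apply d_mp, derivable_pos, Ax4. Qed.

Lemma and_elim_r G a b : G |- And a b -> G |- b.
Proof. apply d_mp, derivable_pos, Ax5. Qed.

Lemma or_elim G a b c :
  G |- Or a b -> extend G a |- c -> extend G b |- c -> G |- c.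
Proof.
  intros Hab Hac Hbc; apply deduction in Hac; apply deduction in Hbc.
  eapply d_mp; [eapply d_mp; [eapply d_mp; [apply derivable_pos, (Ax8 a b c) |] |] |];
    eassumption.
Qed.

Lemma iff_intro G a b : extend G a |- b -> extend G b |- a -> G |- Iff a b.
Proof. intros; apply and_intro; apply deduction; assumption. Qed.

Lemma iff_mp G a b : G |- Iff a b -> G |- a -> G |- b.
Proof. intros Hab; apply d_mp; eapply and_elim_l; exact Hab. Qed.

Lemma iff_mpr G a b : G |- Iff a b -> G |- b -> G |- a.
Proof. intros Hab; apply d_mp; eapply and_elim_r; exact Hab. Qed.

Lemma iff_sym G a b : G |- Iff a b -> G |- Iff b a.
Proof.
  intros Hab; apply and_intro; [eapply and_elim_r | eapply and_elim_l]; exact Hab.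
Qed.

Lemma iff_trans G a b c : G |- Iff a b -> G |- Iff b c -> G |- Iff a c.
Proof.
  intros Hab Hbc; apply iff_intro.
  - apply (iff_mp _ b); [apply derivable_extend; exact Hbc |].
    apply (iff_mp _ a); [apply derivable_extend; exact Hab | premise].
  - apply (iff_mpr _ _ b); [apply derivable_extend; exact Hab |].
    apply (iff_mpr _ _ c); [apply derivable_extend; exact Hbc | premise].
Qed.

Lemma and_congr G a a' b b' :
  G |- Iff a a' -> G |- Iff b b' -> G |- Iff (And a b) (And a' b').
Proof.
  intros Ha Hb; apply iff_intro; apply and_intro.
  - apply (iff_mp _ a); [apply derivable_extend; exact Ha |].
    apply (and_elim_l _ _ b); premise.
  - apply (iff_mp _ b); [apply derivable_extend; exact Hb |].
    apply (and_elim_r _ a); premise.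
  - apply (iff_mpr _ _ a'); [apply derivable_extend; exact Ha |].
    apply (and_elim_l _ _ b'); premise.
  - apply (iff_mpr _ _ b'); [apply derivable_extend; exact Hb |].
    apply (and_elim_r _ a'); premise.
Qed.

End PositiveLogic.

Section L_n_k.

Variables n k : nat.

#[local] Instance L_positive_axioms : PositiveAxioms (L_axiom n k).
Proof. intros a Ha; apply L_base, ciw_mbC, mbC_pos, Ha. Qed.

Notation "G |- a" := (derivable (L_axiom n k) G a) (at level 70).

Lemma explosion G b c : G |- Circ b -> G |- b -> G |- Neg b -> G |- c.
Proof.
  intros Hcb Hb Hnb.
  eapply d_mp; [eapply d_mp; [eapply d_mp; [apply d_ax, L_base, ciw_mbC, (mbC_bc1 b c) |] |] |];
    eassumption.
Qed.

Lemma derivable_ciw G b : G |- Or (Circ b) (And b (Neg b)).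
Proof. apply d_ax, L_base, ciw_ciw. Qed.

Lemma derivable_tnd G b : G |- Or b (Neg b).
Proof. apply d_ax, L_base, ciw_mbC, mbC_TND. Qed.

Lemma derivable_dn G a : G |- Iff (Neg (Neg a)) a.
Proof. apply d_ax, L_dn. Qed.

Lemma derivable_ip G j a : 1 <= j -> j < k ->
  G |- ip_axiom j a.
Proof. intros; apply d_ax, L_ip; assumption. Qed.

Lemma derivable_circ_iter_high G j x : n + 2 <= j -> G |- circ_iter j x.
Proof.
  intros Hj; replace j with (n + 2 + (j - (n + 2))) by lia.
  rewrite circ_iter_add; apply d_ax, L_cc.
Qed.

Lemma neg_circ_iff_contradiction G b :
  G |- Circ (Circ b) -> G |- Iff (Neg (Circ b)) (And b (Neg b)).
Proof.
  intros Hccb; apply iff_intro.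
  - apply (or_elim _ _ _ _ (derivable_ciw _ b)); [| premise].
    apply (explosion _ (Circ b)); [do 2 apply derivable_extend; exact Hccb | premise | premise].
  - apply (or_elim _ _ _ _ (derivable_tnd _ (Circ b))); [| premise].
    apply (explosion _ b); [premise | |].
    + apply (and_elim_l _ _ (Neg b)); premise.
    + apply (and_elim_r _ b); premise.
Qed.

Lemma circ_of_iff G a a' :
  G |- Iff a a' -> G |- Iff (Neg a) (Neg a') -> extend G (Circ a) |- Circ a'.
Proof.
  intros Ha Hna; apply (or_elim _ _ _ _ (derivable_ciw _ a')); [premise |].
  apply (explosion _ a); [premise | |].
  - apply (iff_mpr _ _ a'); [do 2 apply derivable_extend; exact Ha |].
    apply (and_elim_l _ _ (Neg a')); premise.
  - apply (iff_mpr _ _ (Neg a')); [do 2 apply derivable_extend; exact Hna |].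
    apply (and_elim_r _ a'); premise.
Qed.

Lemma circ_congr G a a' :
  G |- Iff a a' -> G |- Iff (Neg a) (Neg a') -> G |- Iff (Circ a) (Circ a').
Proof.
  intros Ha Hna; apply iff_intro; apply circ_of_iff;
    [exact Ha | exact Hna | apply iff_sym, Ha | apply iff_sym, Hna].
Qed.

Lemma circ_neg_iff G a : G |- Iff (Circ a) (Circ (Neg a)).
Proof.
  apply iff_intro.
  - apply (or_elim _ _ _ _ (derivable_ciw _ (Neg a))); [premise |].
    apply (explosion _ a); [premise | |].
    + apply (iff_mp _ (Neg (Neg a))); [apply derivable_dn |].
      apply (and_elim_r _ (Neg a)); premise.
    + apply (and_elim_l _ _ (Neg (Neg a))); premise.
  - apply (or_elim _ _ _ _ (derivable_ciw _ a)); [premise |].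
    apply (explosion _ (Neg a)); [premise | |].
    + apply (and_elim_r _ a); premise.
    + apply (iff_mpr _ _ a); [apply derivable_dn |].
      apply (and_elim_l _ _ (Neg a)); premise.
Qed.

Lemma circ_iter_neg_iff G a j : 1 <= j -> j <= k ->
  G |- Iff (circ_iter j a) (circ_iter j (Neg a)).
Proof.
  induction j as [| j IHj]; intros Hj1 Hjk; [lia |].
  destruct j as [| j]; [apply circ_neg_iff |].
  apply circ_congr; [apply IHj; lia |].
  apply iff_sym, (derivable_ip _ (S j)); lia.
Qed.

Lemma derivable_circ_circ_circ_iter G c : G |- Circ (Circ (circ_iter n c)).
Proof. exact (derivable_circ_iter_high G (2 + n) c ltac:(lia)). Qed.

Lemma contradiction_neg_iff G a :
  G |- Iff (And (Neg a) (Neg (Neg a))) (And a (Neg a)).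
Proof.
  apply iff_intro; apply and_intro.
  - apply (iff_mp _ (Neg (Neg a))); [apply derivable_dn |].
    apply (and_elim_r _ (Neg a)); premise.
  - apply (and_elim_l _ _ (Neg (Neg a))); premise.
  - apply (and_elim_r _ a); premise.
  - apply (iff_mpr _ _ a); [apply derivable_dn |].
    apply (and_elim_l _ _ (Neg a)); premise.
Qed.

Lemma derivable_ip_succ G a : n < k ->
  G |- ip_axiom (S n) a.
Proof.
  intros Hnk; unfold ip_axiom; simpl.
  apply (iff_trans _ _ (And (circ_iter n (Neg a)) (Neg (circ_iter n (Neg a))))).
  { apply neg_circ_iff_contradiction, derivable_circ_circ_circ_iter. }
  apply (iff_trans _ _ (And (circ_iter n a) (Neg (circ_iter n a)))).
  2: { apply iff_sym, neg_circ_iff_contradiction, derivable_circ_circ_circ_iter. }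
  destruct (Nat.eq_dec n 0) as [Hn0 | Hn0].
  - replace (circ_iter n (Neg a)) with (Neg a) by (rewrite Hn0; reflexivity).
    replace (circ_iter n a) with a by (rewrite Hn0; reflexivity).
    apply contradiction_neg_iff.
  - apply and_congr.
    + apply iff_sym, circ_iter_neg_iff; lia.
    + apply derivable_ip; lia.
Qed.

Lemma derivable_ip_high G j a : n + 2 <= j ->
  G |- ip_axiom j a.
Proof.
  intros Hj.
  assert (neg_explosive : forall G' b c, G' |- Neg (circ_iter j b) -> G' |- c).
  { intros G' b c Hnb; apply (explosion _ (circ_iter j b)); [| | exact Hnb].
    - apply (derivable_circ_iter_high _ (S j)); lia.
    - apply derivable_circ_iter_high; lia. }
  apply iff_intro; eapply neg_explosive; premise.
Qed.

Lemma derivable_ip_any G j a : n < k -> 1 <= j ->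
  G |- ip_axiom j a.
Proof.
  intros Hnk Hj.
  destruct (Nat.lt_ge_cases j k); [apply derivable_ip; assumption |].
  destruct (Nat.eq_dec j (S n)) as [-> |]; [apply derivable_ip_succ; assumption |].
  apply derivable_ip_high; lia.
Qed.

End L_n_k.

Lemma L_axiom_derivable n k k' G a :
  n < k -> L_axiom n k' a -> derivable (L_axiom n k) G a.
Proof.
  intros Hnk Ha; destruct Ha as [a Ha | a | a | j a Hj _].
  - apply d_ax, L_base, Ha.
  - apply d_ax, L_cc.
  - apply d_ax, L_dn.
  - apply derivable_ip_any; assumption.
Qed.

Lemma L_derivable_indep_of_k n k k' Gamma a : n < k -> n < k' ->
  L_derivable n k Gamma a <-> L_derivable n k' Gamma a.
Proof.
  intros Hk Hk'; split; apply derivable_mono_axioms; intros b Hb;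
    (eapply L_axiom_derivable; [| exact Hb]; assumption).
Qed.

Theorem theorem28 (n m : nat) (Hm : n + 2 <= m) :
  forall (Gamma : form -> Prop) (alpha : form),
    L_derivable n (n + 1) Gamma alpha <-> L_derivable n m Gamma alpha.
Proof. intros Gamma alpha; apply L_derivable_indep_of_k; lia. Qed.
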